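(* Let $t>1$ be an integer and $n$ sufficiently large. Among all $K_{t-1,t}$-saturated $n$ by $n$ bipartite graphs with minimum degree less than $t-1$, a graph $G$ has the minimum number of edges if and only if $G\in\mathcal{F}^n_{t-1,t}$ and $G$ has minimum degree $t-2$.
   Context: An $n$ by $n$ bipartite graph $G$ has two color classes $U,U'$ with $|U|=|U'|=n$. For $1\le s\le t$, such a $G$ is called $K_{s,t}$-saturated if $G$ contains no subgraph isomorphic to $K_{s,t}$ (with either side of $K_{s,t}$ lying in either class), but adding any missing edge $uu'$ with $u\in U$, $u'\in U'$ creates a subgraph isomorphic to $K_{s,t}$ (with either orientation). $\mathcal{F}^n_{s,t}$ denotes the family of $K_{s,t}$-free $n$ by $n$ bipartite graphs in which one of the color classes contains a set $S$ of $s-1$ vertices such that every vertex of $S$ is adjacent to all $n$ vertices of the other class, and every vertex of that same class not in $S$ has degree exactly $t-1$. (Each graph in $\mathcal{F}^n_{t-1,t}$ has exactly $(2t-3)n-(t-1)(t-2)$ edges.) *)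

From mathcomp Require Import all_boot.
Set Implicit Arguments. Unset Strict Implicit. Unset Printing Implicit Defensive.

(* An n by n bipartite graph with colour classes U = 'I_n and U' = 'I_n:
   the pair (u, u') is an edge iff (u, u') \in G. *)
Notation bigraph n := {set 'I_n * 'I_n}.

Section BiGraph.
Variable n : nat.
Implicit Types (G : bigraph n) (A B S : {set 'I_n}).

Definition degU G (u : 'I_n) : nat := #|[set v | (u, v) \in G]|.
Definition degV G (v : 'I_n) : nat := #|[set u | (u, v) \in G]|.

Definition has_Kst_oriented G (s t : nat) : Prop :=
  exists A B, [/\ #|A| = s, #|B| = t &
                  forall u v, u \in A -> v \in B -> (u, v) \in G].

Definition has_Kst G (s t : nat) : Prop :=
  has_Kst_oriented G s t \/ has_Kst_oriented G t s.

Definition Kst_free G s t : Prop := ~ has_Kst G s t.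

Definition Kst_saturated G s t : Prop :=
  Kst_free G s t /\
  forall u v, (u, v) \notin G -> has_Kst ((u, v) |: G) s t.

Definition mindeg_lt G k : Prop :=
  (exists u, degU G u < k) \/ (exists v, degV G v < k).

Definition mindeg_eq G k : Prop :=
  [/\ forall u, k <= degU G u, forall v, k <= degV G v &
      (exists u, degU G u = k) \/ (exists v, degV G v = k)].

Definition in_F G s t : Prop :=
  Kst_free G s t /\
  ((exists S, #|S| = s - 1 /\
      (forall u, u \in S -> forall v, (u, v) \in G) /\
      (forall u, u \notin S -> degU G u = t - 1))
   \/
   (exists S, #|S| = s - 1 /\
      (forall v, v \in S -> forall u, (u, v) \in G) /\
      (forall v, v \notin S -> degV G v = t - 1))).

End BiGraph.

From mathcomp Require Import all_boot zify.
Set Implicit Arguments. Unset Strict Implicit. Unset Printing Implicit Defensive.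

(* Let u0 be a vertex of degree at most k = t - 2 and W its neighbourhood.  For a
   non-edge u0 v, the copy of K_{k+1,k+2} created by adding u0 v must have u0 on its
   (k+2)-side; hence |W| = k, and v has k + 1 neighbours whose neighbourhoods contain
   W.  In particular all degrees are at least k.  Let C be the set of vertices
   other than u0 whose neighbourhood contains W: double counting the edges between
   C and the complement of W gives |G| >= k n + (n - k)(k + 1).  In the equality case
   every vertex outside C has degree exactly k.  If some x <> u0 were outside C,
   saturation at a non-edge x v with v outside W and N(x) (possible once n > 2k)
   would give k + 1 vertices of C adjacent to v, to N(x) and to a vertex of
   W \ N(x): a K_{k+1,k+2}.  So W is a set of universal vertices and the other
   vertices of its side have degree k + 1, i.e. G is in F.  An explicit member of F
   with a vertex of degree k shows that the bound is attained; for t = 2 there is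
   no saturated graph with an isolated vertex at all. *)

Section Bigraph.
Variable n : nat.
Implicit Types (G : bigraph n) (A B : {set 'I_n}).

Definition nbU G u := [set v | (u, v) \in G].
Definition nbV G v := [set u | (u, v) \in G].

Lemma degUE G u : degU G u = #|nbU G u|. Proof. by []. Qed.
Lemma degVE G v : degV G v = #|nbV G v|. Proof. by []. Qed.

Lemma card_sum_degU G : #|G| = \sum_u degU G u.
Proof.
under eq_bigr => u _ do rewrite /degU -sum1_card big_mkcond /=.
rewrite pair_bigA /= -sum1_card big_mkcond /=.
by apply: eq_bigr => -[u v] _; rewrite inE.
Qed.

Lemma card_sum_degV G : #|G| = \sum_v degV G v.
Proof.
under eq_bigr => v _ do rewrite /degV -sum1_card big_mkcond /=.
rewrite exchange_big pair_bigA /= -sum1_card big_mkcond /=.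
by apply: eq_bigr => -[u v] _; rewrite inE.
Qed.

Lemma exists_notin A : #|A| < n -> exists v, v \notin A.
Proof.
move=> ltAn; have : 0 < #|~: A| by have := cardsC A; rewrite card_ord; lia.
by case/card_gt0P => v; rewrite inE; exists v.
Qed.

Lemma eq_of_leq_sum (I : finType) (P : pred I) (a b : I -> nat) :
  (forall i, P i -> b i <= a i) -> \sum_(i | P i) a i <= \sum_(i | P i) b i ->
  forall i, P i -> a i = b i.
Proof.
move=> le_ba le_sum i Pi.
have : \sum_(i | P i) (a i - b i) == 0 by rewrite sumnB // subn_eq0.
by rewrite sum_nat_eq0 => /forall_inP /(_ i Pi); have := le_ba i Pi; lia.
Qed.

Definition trG G : bigraph n := [set p | (p.2, p.1) \in G].

Lemma in_trG G u v : ((u, v) \in trG G) = ((v, u) \in G).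
Proof. by rewrite inE. Qed.

Lemma trGK G : trG (trG G) = G.
Proof. by apply/setP => -[u v]; rewrite !in_trG. Qed.

Lemma degU_trG G u : degU (trG G) u = degV G u.
Proof. by apply: eq_card => v; rewrite !inE. Qed.

Lemma degV_trG G v : degV (trG G) v = degU G v.
Proof. by apply: eq_card => u; rewrite !inE. Qed.

Lemma card_trG G : #|trG G| = #|G|.
Proof.
by rewrite card_sum_degU card_sum_degV; apply: eq_bigr => u _; exact: degU_trG.
Qed.

Lemma has_Kst_oriented_trG G s t :
  has_Kst_oriented (trG G) s t <-> has_Kst_oriented G t s.
Proof.
by split=> -[A [B [cA cB AB]]]; exists B, A; split=> // u v hu hv;
  [rewrite -in_trG | rewrite in_trG]; apply: AB.
Qed.

Lemma has_Kst_trG G s t : has_Kst (trG G) s t <-> has_Kst G s t.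
Proof. by rewrite /has_Kst !has_Kst_oriented_trG; tauto. Qed.

Lemma trG_setU1 G u v : trG ((u, v) |: G) = (v, u) |: trG G.
Proof.
by apply/setP => -[a b]; rewrite in_trG !in_setU1 in_trG !xpair_eqE andbC.
Qed.

Lemma Kst_saturated_trG G s t : Kst_saturated G s t -> Kst_saturated (trG G) s t.
Proof.
move=> [G_free G_add]; split; first by rewrite /Kst_free has_Kst_trG.
by move=> u v; rewrite in_trG => /G_add; rewrite -has_Kst_trG trG_setU1.
Qed.

Lemma mindeg_eq_trG G m : mindeg_eq G m -> mindeg_eq (trG G) m.
Proof.
case=> geU geV exm; split=> [u|v|]; rewrite ?degU_trG ?degV_trG //.
by case: exm => -[x hx]; [right | left]; exists x; rewrite ?degU_trG ?degV_trG.
Qed.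

Lemma in_F_trG G s t : in_F G s t -> in_F (trG G) s t.
Proof.
case=> G_free G_F; split; first by rewrite /Kst_free has_Kst_trG.
case: G_F => -[S [cS [full deg]]]; [right | left]; exists S; do 2!split=> //.
- by move=> x /full Gx y; rewrite in_trG.
- by move=> x /deg; rewrite degV_trG.
- by move=> x /full Gx y; rewrite in_trG.
- by move=> x /deg; rewrite degU_trG.
Qed.

Lemma has_Kst_oriented_setU1 G u0 v s t :
  ~ has_Kst_oriented G s t -> has_Kst_oriented ((u0, v) |: G) s t ->
  exists A B, [/\ #|A| = s, #|B| = t, u0 \in A, B \subset v |: nbU G u0 &
    forall a b, a \in A :\ u0 -> b \in B -> (a, b) \in G].
Proof.
move=> G_free [A [B [cA cB AB]]].
have AB' : forall a b, a \in A :\ u0 -> b \in B -> (a, b) \in G.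
  move=> a b /setD1P [a_u0 aA] bB; move: (AB a b aA bB).
  by rewrite in_setU1 xpair_eqE (negbTE a_u0).
have u0A : u0 \in A.
  apply/negPn/negP => u0A; apply: G_free; exists A, B; split=> // a b aA.
  by apply: AB'; rewrite in_setD1 aA andbT; apply: contraNneq u0A => <-.
exists A, B; split=> //; apply/subsetP => b bB; move: (AB u0 b u0A bB).
by rewrite !in_setU1 xpair_eqE eqxx inE.
Qed.

End Bigraph.

Section Saturated.
Variables (n k : nat) (G : bigraph n).
Hypothesis G_sat : Kst_saturated G k.+1 k.+2.

Lemma saturated_nonedge u0 v : (u0, v) \notin G -> degU G u0 <= k ->
  degU G u0 = k /\ exists A : {set 'I_n}, [/\ #|A| = k.+1, u0 \notin A &
    forall a, a \in A -> (a, v) \in G /\ nbU G u0 \subset nbU G a].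
Proof.
move=> uv deg_le; have [G_free G_add] := G_sat.
have nb_le : #|v |: nbU G u0| <= k.+1.
  by rewrite cardsU1 -degUE; have := leq_b1 (v \notin nbU G u0); lia.
case: (G_add _ _ uv) =>
  [/(has_Kst_oriented_setU1 (fun K => G_free (or_introl K)))
  |/(has_Kst_oriented_setU1 (fun K => G_free (or_intror K)))]
  [A [B [cA cB u0A sB AB]]].
  by have := subset_leq_card sB; rewrite cB ltnNge nb_le.
have eB : B = v |: nbU G u0 by apply/eqP; rewrite eqEcard sB cB.
split.
  have := subset_leq_card sB; rewrite cB cardsU1 -degUE.
  by have := leq_b1 (v \notin nbU G u0); lia.
exists (A :\ u0); split; first by move: cA; rewrite (cardsD1 u0) u0A; case.
  by rewrite setD11.
move=> a aA; split; first by apply: AB; rewrite // eB setU11.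
by apply/subsetP => w uw; rewrite inE; apply: AB; rewrite // eB setU1r.
Qed.

Lemma saturated_degU_ge u : k <= n -> k <= degU G u.
Proof.
move=> le_kn; rewrite leqNgt; apply/negP => lt_deg.
have [v uv] : exists v, v \notin nbU G u by apply: exists_notin; rewrite -degUE; lia.
by rewrite inE in uv; have [] := saturated_nonedge uv (ltnW lt_deg); lia.
Qed.

End Saturated.

Lemma card_sep (T : finType) (A : {set T}) (P : pred T) :
  #|[set x in A | P x]| = \sum_(x in A) P x.
Proof.
rewrite -sum1_card (eq_bigl (fun x => (x \in A) && P x)) => [|x]; last by rewrite inE.
by rewrite big_mkcondr.
Qed.

(* (2t - 3) n - (t - 1)(t - 2) for t = k + 2 *)
Definition extremal_size n k := k * n + (n - k) * k.+1.

Section LowDegreeVertex.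
Variables (n k : nat) (G : bigraph n) (u0 : 'I_n).
Hypotheses (G_sat : Kst_saturated G k.+1 k.+2) (deg_u0 : degU G u0 <= k) (lt_kn : k < n).

Local Notation W := (nbU G u0).
Let C := [set u | (u != u0) && (W \subset nbU G u)].
Let excess u := #|nbU G u :\: W|.
Let lower u := k + (if u \in C then excess u else 0).

Lemma card_nbU_low : #|W| = k.
Proof.
have [v uv] := exists_notin (leq_ltn_trans deg_u0 lt_kn).
by rewrite inE in uv; have [] := saturated_nonedge G_sat uv deg_u0.
Qed.

Lemma card_setC_nbU_low : #|~: W| = n - k.
Proof. by rewrite cardsCs setCK card_ord card_nbU_low. Qed.

Lemma card_nbV_C v : v \notin W -> k.+1 <= #|nbV G v :&: C|.
Proof.
rewrite inE => u0v; have [_ [A [cA u0A AP]]] := saturated_nonedge G_sat u0v deg_u0.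
rewrite -cA; apply/subset_leq_card/subsetP => a aA; have [av Wa] := AP a aA.
by rewrite !inE av Wa andbT; apply: contraNneq u0A => <-.
Qed.

Lemma degU_C u : u \in C -> degU G u = k + excess u.
Proof.
rewrite inE => /andP [_ Wu].
by rewrite degUE -card_nbU_low -(cardsID W (nbU G u)) (setIidPr Wu).
Qed.

Lemma sum_excess : \sum_(u in C) excess u = \sum_(v in ~: W) #|nbV G v :&: C|.
Proof.
have excessE u : excess u = \sum_(v in ~: W) ((u, v) \in G).
  by rewrite -card_sep; apply: eq_card => v; rewrite !inE andbC.
under eq_bigr do rewrite excessE.
rewrite exchange_big; apply: eq_bigr => v _.
by rewrite -card_sep; apply: eq_card => u; rewrite !inE andbC.
Qed.

Lemma lower_le_degU u : lower u <= degU G u.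
Proof.
rewrite /lower; case: ifP => [/degU_C -> // | _].
by rewrite addn0 saturated_degU_ge // ltnW.
Qed.

Lemma sum_lower : \sum_u lower u = k * n + \sum_(v in ~: W) #|nbV G v :&: C|.
Proof.
by rewrite big_split sum_nat_const card_ord mulnC -sum_excess [in RHS]big_mkcond.
Qed.

Lemma sum_nbV_C_ge : (n - k) * k.+1 <= \sum_(v in ~: W) #|nbV G v :&: C|.
Proof.
rewrite -card_setC_nbU_low -sum_nat_const.
by apply: leq_sum => v; rewrite inE; exact: card_nbV_C.
Qed.

Lemma sum_degU_ge : k * n + \sum_(v in ~: W) #|nbV G v :&: C| <= \sum_u degU G u.
Proof. by rewrite -sum_lower; apply: leq_sum => u _; exact: lower_le_degU. Qed.

Lemma extremal_size_le_sum_degU : extremal_size n k <= \sum_u degU G u.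
Proof. by apply: leq_trans sum_degU_ge; rewrite leq_add2l sum_nbV_C_ge. Qed.

Hypothesis tight : \sum_u degU G u <= extremal_size n k.

Lemma tight_degU u : degU G u = lower u.
Proof.
apply: (@eq_of_leq_sum _ predT) => // [v _|]; first exact: lower_le_degU.
by rewrite sum_lower; apply: leq_trans tight _; rewrite leq_add2l sum_nbV_C_ge.
Qed.

Lemma tight_degU_notin_C u : u \notin C -> degU G u = k.
Proof. by move=> uC; rewrite tight_degU /lower (negbTE uC) addn0. Qed.

Lemma tight_card_nbV_C v : v \notin W -> #|nbV G v :&: C| = k.+1.
Proof.
move=> vW; apply: (@eq_of_leq_sum _ (fun w => w \in ~: W) (fun w => #|nbV G w :&: C|)
  (fun=> k.+1)); last by rewrite inE.
  by move=> w; rewrite inE; exact: card_nbV_C.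
rewrite sum_nat_const card_setC_nbU_low -(leq_add2l (k * n)).
exact: leq_trans sum_degU_ge tight.
Qed.

Lemma tight_nbU_eq x a : x \notin C -> a \notin C ->
  nbU G x \subset nbU G a -> nbU G x = nbU G a.
Proof.
move=> xC aC xa; apply/eqP.
by rewrite eqEcard xa -!degUE (tight_degU_notin_C xC) (tight_degU_notin_C aC) leqnn.
Qed.

Hypothesis lt_2k_n : k + k < n.

Lemma tight_in_C x : x != u0 -> x \in C.
Proof.
move=> x_u0; apply/negPn/negP => xC; have [G_free _] := G_sat.
have degx : degU G x = k := tight_degU_notin_C xC.
have [w wW wx] : exists2 w, w \in W & w \notin nbU G x.
  by apply/subsetPn; move: xC; rewrite inE x_u0.
have [v] : exists v, v \notin W :|: nbU G x.
  apply: exists_notin; rewrite cardsU card_nbU_low -degUE degx.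
  exact: leq_ltn_trans (leq_subr _ _) lt_2k_n.
rewrite in_setU negb_or => /andP [vW vx].
have vw : v != w by apply: contraNneq vW => ->.
have xv : (x, v) \notin G by move: vx; rewrite inE.
have [_ [A [cA xA AP]]] := saturated_nonedge G_sat xv (eq_leq degx).
have AC a : a \in A -> a \in C.
  move=> aA; have [av xa] := AP a aA; apply/negPn/negP => aC.
  by move: vx; rewrite (tight_nbU_eq xC aC xa) inE av.
apply: G_free; left; exists A, (v |: (w |: nbU G x)); split=> //.
  by rewrite !cardsU1 !in_setU1 (negbTE vw) (negbTE vx) wx -degUE degx.
move=> a b aA; rewrite !in_setU1 => /predU1P [-> | /predU1P [-> | bx]].
- by have [] := AP a aA.
- by move: (AC a aA); rewrite inE => /andP [_ /subsetP /(_ w wW)]; rewrite inE.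
- by have [_ /subsetP /(_ b bx)] := AP a aA; rewrite inE.
Qed.

Lemma tight_nbU_low_universal v : v \in W -> forall u, (u, v) \in G.
Proof.
move=> vW u; case: (eqVneq u u0) => [-> | u_u0]; first by rewrite inE in vW.
by move: (tight_in_C u_u0); rewrite inE => /andP [_ /subsetP /(_ v vW)]; rewrite inE.
Qed.

Lemma tight_degV v : v \notin W -> degV G v = k.+1.
Proof.
move=> vW; rewrite degVE -(tight_card_nbV_C vW); apply: eq_card => u.
rewrite in_setI; case: (eqVneq u u0) => [-> | /tight_in_C ->]; last by rewrite andbT.
by move: vW; rewrite !inE eqxx andbF => /negbTE.
Qed.

End LowDegreeVertex.

Lemma saturated_extremal_U n k (G : bigraph n) u0 :
  Kst_saturated G k.+1 k.+2 -> degU G u0 <= k -> k + k < n ->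
  extremal_size n k <= #|G| /\
  (#|G| <= extremal_size n k -> in_F G k.+1 k.+2 /\ mindeg_eq G k).
Proof.
move=> G_sat deg_u0 lt_2k_n; have lt_kn : k < n by lia.
rewrite card_sum_degU; split=> [|tight].
  exact: extremal_size_le_sum_degU G_sat deg_u0 lt_kn.
split.
  split; first by case: G_sat.
  right; exists (nbU G u0); split; first by rewrite subn1 (card_nbU_low G_sat).
  split; [exact: tight_nbU_low_universal tight lt_2k_n | exact: tight_degV tight lt_2k_n].
split=> [u|v|]; first exact/(saturated_degU_ge G_sat)/ltnW.
  rewrite -degU_trG; exact/(saturated_degU_ge (Kst_saturated_trG G_sat))/ltnW.
by left; exists u0; exact: card_nbU_low G_sat deg_u0 lt_kn.
Qed.

Lemma saturated_extremal n k (G : bigraph n) :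
  Kst_saturated G k.+1 k.+2 -> mindeg_lt G k.+1 -> k + k < n ->
  extremal_size n k <= #|G| /\
  (#|G| <= extremal_size n k -> in_F G k.+1 k.+2 /\ mindeg_eq G k).
Proof.
move=> G_sat [[u low_u] | [v low_v]] lt_2k_n.
  exact: saturated_extremal_U low_u lt_2k_n.
have low_v' : degU (trG G) v <= k by rewrite degU_trG.
have [low up] := saturated_extremal_U (Kst_saturated_trG G_sat) low_v' lt_2k_n.
rewrite card_trG in low up; split=> // /up [F_trG eq_trG].
by rewrite -[G]trGK; split; [exact: in_F_trG | exact: mindeg_eq_trG].
Qed.

Lemma sum_piecewise_const n (S : {set 'I_n}) (F : 'I_n -> nat) a b :
  (forall v, v \in S -> F v = a) -> (forall v, v \notin S -> F v = b) ->
  \sum_v F v = #|S| * a + (n - #|S|) * b.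
Proof.
move=> Fa Fb; rewrite (bigID [in S]) /= (eq_bigr _ Fa) sum_nat_const.
rewrite (eq_bigr _ Fb) sum_nat_cond_const.
by rewrite -/(~: S) [#|~: S|]cardsCs setCK card_ord.
Qed.

Lemma card_in_F n k (G : bigraph n) : in_F G k.+1 k.+2 -> #|G| = extremal_size n k.
Proof.
case=> _ [] [S [cS [full deg]]]; rewrite subn1 /= in cS.
  rewrite card_sum_degU (sum_piecewise_const (a := n) (b := k.+1) (S := S)) ?cS //.
  move=> u /full Gu; rewrite -[RHS]card_ord -cardsT; apply: eq_card => v.
  by rewrite !inE Gu.
rewrite card_sum_degV (sum_piecewise_const (a := n) (b := k.+1) (S := S)) ?cS //.
move=> v /full Gv; rewrite -[RHS]card_ord -cardsT; apply: eq_card => u.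
by rewrite !inE Gv.
Qed.

Lemma Kst_saturated_of_nbV_inj n k (G : bigraph n) (S : {set 'I_n}) :
  #|S| = k -> (forall v, v \in S -> forall u, (u, v) \in G) ->
  (forall v, v \notin S -> degV G v = k.+1) -> {in ~: S &, injective (nbV G)} ->
  Kst_saturated G k.+1 k.+2.
Proof.
move=> cS full degS nbV_inj.
have sub_nbV v (A : {set 'I_n}) :
    (forall u, u \in A -> (u, v) \in G) -> A \subset nbV G v.
  by move=> Av; apply/subsetP => u /Av; rewrite inE.
have card_setDS (B : {set 'I_n}) : #|B| - k <= #|B :\: S|.
  by rewrite cardsD -cS leq_sub2l // subset_leq_card // subsetIr.
split.
  case=> -[A [B [cA cB AB]]].
    have : 1 < #|B :\: S| by apply: leq_trans (card_setDS B); rewrite cB; lia.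
    case/card_gt1P => v1 [v2 [/setDP [v1B v1S] /setDP [v2B v2S] v12]].
    have nbV_A v : v \in B -> v \notin S -> nbV G v = A.
      move=> vB vS; apply/esym/eqP; rewrite eqEcard -degVE degS // cA leqnn andbT.
      by apply: sub_nbV => u uA; exact: AB.
    by move/eqP: v12; apply; apply: nbV_inj; rewrite ?inE // !nbV_A.
  have : 0 < #|B :\: S| by apply: leq_trans (card_setDS B); rewrite cB; lia.
  case/card_gt0P => v /setDP [vB vS].
  have := subset_leq_card (sub_nbV v A (fun u uA => AB u v uA vB)).
  by rewrite -degVE degS // cA ltnn.
move=> u v uv; have vS : v \notin S by apply: contra uv => /full.
right; exists (u |: nbV G v), (v |: S); split.
- by rewrite cardsU1 inE (negbTE uv) -degVE degS.
- by rewrite cardsU1 vS cS.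
- move=> a b; rewrite in_setU1 !in_setU1 => /predU1P [-> | aG] /predU1P [-> | bS].
  + by rewrite eqxx.
  + by rewrite full ?orbT.
  + by rewrite inE in aG; rewrite aG orbT.
  + by rewrite full ?orbT.
Qed.

Lemma card_ord_range n a b : a <= b <= n -> #|[set u : 'I_n | a <= u < b]| = b - a.
Proof.
elim: b => [|b IH] /andP [ab bn].
  by apply/eqP; rewrite sub0n cards_eq0; apply/eqP/setP => u; rewrite !inE ltn0 andbF.
case: (ltnP b a) => [ba | ab'].
  have -> : a = b.+1 by apply/eqP; rewrite eqn_leq ab ba.
  apply/eqP; rewrite subnn cards_eq0; apply/eqP/setP => u.
  by rewrite !inE ltnS; case: ltnP.
have -> : [set u : 'I_n | a <= u < b.+1] = Ordinal bn |: [set u : 'I_n | a <= u < b].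
  by apply/setP => u; rewrite !inE -val_eqE /=; apply/idP/idP; lia.
by rewrite cardsU1 IH ?ab' ?(ltnW bn) // inE ltnn andbF; lia.
Qed.

(* Columns v < k are universal; column v with k <= v < n - 1 is joined to rows
   1..k and v + 1, and the last column to rows 2..k + 2.  These are distinct
   (k + 1)-sets of rows avoiding row 0, which therefore has degree k. *)
Definition extremal_graph n k : bigraph n :=
  [set p : 'I_n * 'I_n | (p.2 < k) ||
     ((p.2 < n.-1) && ((0 < p.1 <= k) || (p.1 == (p.2).+1 :> nat))) ||
     ((p.2 == n.-1 :> nat) && (1 < p.1 <= k.+2))].

Section ExtremalGraph.
Variables (n k : nat).
Hypotheses (k_gt0 : 0 < k) (k3_le_n : k.+3 <= n).

Let H := extremal_graph n k.
Let S := [set v : 'I_n | 0 <= v < k].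

Lemma extremal_graph_card_S : #|S| = k.
Proof. by rewrite card_ord_range ?subn0 //; lia. Qed.

Lemma extremal_graph_full v : v \in S -> forall u, (u, v) \in H.
Proof. by rewrite inE => /= vk u; rewrite inE /= vk. Qed.

Lemma extremal_graph_degV v : v \notin S -> degV H v = k.+1.
Proof.
rewrite inE /= -leqNgt degVE => kv; have := ltn_ord v.
case: (ltnP v n.-1) => [vn1 vn | vn1 vn].
  have v1n : v.+1 < n by lia.
  have -> : nbV H v = Ordinal v1n |: [set u : 'I_n | 1 <= u < k.+1].
    by apply/setP => u; rewrite !inE -val_eqE /=; apply/idP/idP; lia.
  have v1_notin : Ordinal v1n \notin [set u : 'I_n | 1 <= u < k.+1].
    by rewrite inE /=; lia.
  by rewrite cardsU1 v1_notin card_ord_range //; lia.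
have -> : nbV H v = [set u : 'I_n | 2 <= u < k.+3].
  by apply/setP => u; rewrite !inE /=; apply/idP/idP; lia.
by rewrite card_ord_range //; lia.
Qed.

Lemma extremal_graph_nbV_inj : {in ~: S &, injective (nbV H)}.
Proof.
move=> v1 v2; rewrite !inE /= -!leqNgt => kv1 kv2 /setP e; apply: val_inj => /=.
have := ltn_ord v1; have := ltn_ord v2; have n1 : 1 < n by lia.
have := e (Ordinal n1); rewrite !inE /= => e1.
case: (ltnP v1 n.-1) => c1.
  have o : v1.+1 < n by lia.
  by have := e (Ordinal o); rewrite !inE /=; lia.
case: (ltnP v2 n.-1) => c2; last by lia.
have o : v2.+1 < n by lia.
by have := e (Ordinal o); rewrite !inE /=; lia.
Qed.

Lemma extremal_graph_spec :
  [/\ Kst_saturated H k.+1 k.+2, mindeg_lt H k.+1 & #|H| = extremal_size n k].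
Proof.
have H_sat := Kst_saturated_of_nbV_inj extremal_graph_card_S extremal_graph_full
  extremal_graph_degV extremal_graph_nbV_inj.
have n_gt0 : 0 < n by lia.
split=> //.
  left; exists (Ordinal n_gt0); rewrite degUE.
  have -> : nbU H (Ordinal n_gt0) = S by apply/setP => v; rewrite !inE /=; lia.
  by rewrite extremal_graph_card_S.
apply: card_in_F; split; first by case: H_sat.
right; exists S; rewrite subn1 extremal_graph_card_S; do !split=> //.
  exact: extremal_graph_full.
exact: extremal_graph_degV.
Qed.

End ExtremalGraph.

Lemma K12_free_degU_le1 n (G : bigraph n) u : Kst_free G 1 2 -> degU G u <= 1.
Proof.
move=> G_free; rewrite leqNgt; apply/negP => /card_gt1P [v1 [v2 [uv1 uv2 v12]]].
apply: G_free; left; exists [set u], [set v1; v2]; split; first exact: cards1.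
  by rewrite cards2 v12.
by move=> a b /set1P -> /set2P [] ->; [move: uv1 | move: uv2]; rewrite inE.
Qed.

Lemma K12_saturated_degU_gt0 n (G : bigraph n) u : Kst_saturated G 1 2 -> 0 < degU G u.
Proof.
move=> G_sat; rewrite lt0n; apply/negP => /eqP deg0.
have n_gt0 : 0 + 0 < n by exact: leq_ltn_trans (leq0n u) (ltn_ord u).
have [low _] := saturated_extremal_U G_sat (eq_leq deg0) n_gt0.
have : #|G| <= n.-1.
  rewrite card_sum_degU (bigD1 u) //= deg0.
  rewrite -[in n.-1](card_ord n) -(cardC1 u) -sum1_card.
  by apply: leq_sum => v _; exact: K12_free_degU_le1 G_sat.1.
by move: low; rewrite /extremal_size subn0 mul0n muln1; lia.
Qed.

Lemma K12_saturated_mindeg n (G : bigraph n) : Kst_saturated G 1 2 -> ~ mindeg_lt G 1.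
Proof.
move=> G_sat [[u] | [v]]; rewrite ltnNge.
  by rewrite K12_saturated_degU_gt0.
by rewrite -degU_trG (K12_saturated_degU_gt0 _ (Kst_saturated_trG G_sat)).
Qed.

Theorem proposition2p2 (t : nat) (ht : 1 < t) :
  exists N : nat, forall n : nat, N <= n ->
    forall G : bigraph n,
      Kst_saturated G (t - 1) t -> mindeg_lt G (t - 1) ->
      ((forall H : bigraph n,
          Kst_saturated H (t - 1) t -> mindeg_lt H (t - 1) ->
          #|G| <= #|H|)
       <-> (in_F G (t - 1) t /\ mindeg_eq G (t - 2))).
Proof.
case: t ht => [|[|k]] // _; rewrite !subSS !subn0.
exists (k + k + 3) => n le_n G G_sat G_low; have lt_2k_n : k + k < n by lia.
have [_ G_tight] := saturated_extremal G_sat G_low lt_2k_n.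
split=> [G_min | [G_F _] H H_sat H_low].
  apply: G_tight; case: (posnP k) => [k0 | k_gt0].
    by move: G_sat G_low; rewrite k0 => /K12_saturated_mindeg.
  have k3_le_n : k.+3 <= n by lia.
  by have [H_sat H_low <-] := extremal_graph_spec k_gt0 k3_le_n; apply: G_min.
by rewrite (card_in_F G_F); exact: (saturated_extremal H_sat H_low lt_2k_n).1.
Qed.
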